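(* Let $q\geq4$ be an even integer, $n=q^2-1$, and let $A_0=I,A_1,A_2,A_3$ be the adjacency matrices of a symmetric 3-class association scheme on $n$ points with first eigenmatrix \[ P=\begin{bmatrix}1&\frac{q^2}{2}-q&\frac{q^2}{2}&q-2\\ 1&\frac q2&-\frac q2&-1\\ 1&-\frac q2+1&-\frac q2&q-2\\ 1&-\frac q2&\frac q2&-1\end{bmatrix}. \] Let $w_3$ be a complex number with $w_3+\frac1{w_3}+q^2-3=0$. (a) If $W=A_0+w_3(A_1+A_2+A_3)$, then $W$ and $W^{(-)}$ are inequivalent. (b) If $W=A_0+w_1A_1+w_1A_2+w_3A_3$ with $w_1=\frac{-(q-3)w_3+(q-1)}{q^2-2q-1}$, then $W$ and $W^{(-)}$ are inequivalent.
   Context: A symmetric association scheme with adjacency matrices $A_0=I,\dots,A_d$: symmetric $(0,1)$-matrices summing to $J$ whose span is closed under multiplication; with primitive idempotents $E_0=\frac1nJ,\dots,E_d$, the first eigenmatrix is defined by $A_j=\sum_iP_{i,j}E_i$. The matrices $W$ in (a) and (b) are type-II matrices, i.e. have nonzero complex entries and satisfy $W(W^{(-)})^\top=nI$, where $W^{(-)}$ is the entrywise inverse of $W$. Two type-II matrices $W_1,W_2$ are equivalent if there exist invertible diagonal matrices $D,D'$ and permutation matrices $T,T'$ with $DW_1D'=TW_2T'$. *)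

From HB Require Import structures.
From mathcomp Require Import all_boot all_order all_algebra all_fingroup all_field.
Set Implicit Arguments. Unset Strict Implicit. Unset Printing Implicit Defensive.
Import Order.TTheory GRing.Theory Num.Theory.
Local Open Scope ring_scope.

Definition sym_assoc_scheme (n d : nat) (A : 'I_d.+1 -> 'M[algC]_n) : Prop :=
  A ord0 = 1%:M /\
      (forall i, A i != 0) /\
      (forall i, (A i)^T = A i) /\
      (forall i x y, A i x y = 0 \/ A i x y = 1) /\
      \sum_i A i = const_mx 1 /\
      (forall i j, exists c : 'I_d.+1 -> algC, A i *m A j = \sum_k c k *: A k).

Definition first_eigenmatrix (n d : nat) (A : 'I_d.+1 -> 'M[algC]_n)
    (P : 'M[algC]_d.+1) : Prop :=
  exists E : 'I_d.+1 -> 'M[algC]_n,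
    E ord0 = (n%:R)^-1 *: const_mx 1 /\
        (forall i, E i != 0) /\
        (forall i j, E i *m E j = if i == j then E i else 0) /\
        \sum_i E i = 1%:M /\
        (forall i, exists c : 'I_d.+1 -> algC, E i = \sum_k c k *: A k) /\
        (forall j, A j = \sum_i P i j *: E i).

Definition entry_inv (n : nat) (W : 'M[algC]_n) : 'M[algC]_n :=
  map_mx (fun x => x^-1) W.

Definition typeII_equiv (n : nat) (W1 W2 : 'M[algC]_n) : Prop :=
  exists (dl dr : 'rV[algC]_n) (s t : 'S_n),
    (forall i, dl 0 i != 0) /\ (forall i, dr 0 i != 0) /\
    diag_mx dl *m W1 *m diag_mx dr = perm_mx s *m W2 *m perm_mx t.

Definition Pq (q : nat) : 'M[algC]_4 :=
  let Q : algC := q%:R in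
  let rows : seq (seq algC) :=
    [:: [:: 1; Q ^+ 2 / 2 - Q; Q ^+ 2 / 2; Q - 2];
        [:: 1; Q / 2; - (Q / 2); -1];
        [:: 1; - (Q / 2) + 1; - (Q / 2); Q - 2];
        [:: 1; - (Q / 2); Q / 2; -1]] in
  \matrix_(i < 4, j < 4) nth 0 (nth [::] rows i) j.

(* An equivalence D W D' = T W^(-) T' carries the cross ratios
   W_xy W_x'y' / (W_xy' W_x'y) of W to the inverted cross ratios of W at
   permuted positions.  In both cases W has unit diagonal, a row a with two
   entries W_ab = W_ab' = w3 (the class A_3 has valency P_03 = q - 2 >= 2), and
   off-diagonal entries whose moduli lie between |w3| and 1: w3 is a real root
   of t^2 + (q^2 - 3) t + 1 other than -1, and w1 is squeezed between -w3 and 1.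
   Comparing moduli, a cross ratio of W equals w3^2 only when x = y'; the
   inverted cross ratio at the positions of (a, d; a, d) is w3^2 for d = b, b',
   so the column permutation sends b and b' to the same column. *)
From HB Require Import structures.
From mathcomp Require Import all_boot all_order all_algebra all_fingroup all_field.
From mathcomp Require Import ring lra zify.
Set Implicit Arguments. Unset Strict Implicit. Unset Printing Implicit Defensive.
Import Order.TTheory GRing.Theory Num.Theory.
Local Open Scope ring_scope.

Definition norm_between (R : numDomainType) (w v : R) :=
  (`|w| <= `|v| < 1) || (1 < `|v| <= `|w|).

Section NormBetween.
Variable R : numDomainType.
Implicit Types w v : R.

Lemma norm_between_lt1 w v : `|w| < 1 -> norm_between w v -> `|w| <= `|v| < 1.
Proof.
move=> w1 /orP[// | /andP[v1 vw]].
by have := lt_trans (lt_le_trans v1 vw) w1; rewrite ltxx.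
Qed.

Lemma norm_between_gt1 w v : 1 < `|w| -> norm_between w v -> 1 < `|v| <= `|w|.
Proof.
move=> w1 /orP[/andP[wv v1] | //].
by have := lt_trans w1 (le_lt_trans wv v1); rewrite ltxx.
Qed.

End NormBetween.

Section TypeIIMatrix.
Variables (n : nat) (W : 'M[algC]_n).

Lemma equiv_entry_inv_cross_ratio : typeII_equiv W (entry_inv W) ->
  exists s u : 'S_n, forall x x' y y',
    W x y * W x' y' * ((W (s x) (u y'))^-1 * (W (s x') (u y))^-1)
    = W x y' * W x' y * ((W (s x) (u y))^-1 * (W (s x') (u y'))^-1).
Proof.
case=> dl [dr [s [t [_ [_ equiv]]]]]; exists s, t^-1%g => x x' y y'.
have entry i j : dl 0 i * W i j * dr 0 j = (W (s i) (t^-1%g j))^-1.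
  have := congr1 (fun M : 'M[algC]_n => M i j) equiv.
  by rewrite /= -row_permE -[t]invgK -col_permE mul_mx_diag mul_diag_mx !mxE !invgK.
by rewrite -!entry; ring.
Qed.

Hypothesis W_diag : forall x, W x x = 1.
Variable w : algC.
Hypothesis w_neq0 : w != 0.
Hypothesis W_offdiag : forall x y, x != y -> norm_between w (W x y).

(* Comparing moduli: one side is at least [|w|^2] and the other strictly below
   it (or the reverse when [1 < |w|]) unless [W x y'] is a diagonal entry. *)
Lemma cross_ratio_eq_sqr x x' y y' :
  W x y * W x' y' = w ^+ 2 * (W x y' * W x' y) -> x = y'.
Proof.
move=> /(congr1 (fun z => `|z|)); rewrite /= !normrM -expr2 => eq_norm.
apply/eqP; apply: contraT => xy'.
have w2_gt0 : 0 < `|w| ^+ 2 by rewrite exprn_gt0 ?normr_gt0.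
have [w1 | w1] : `|w| < 1 \/ 1 < `|w|.
  case/orP: (W_offdiag xy') => /andP[h1 h2]; [left | right].
  - exact: le_lt_trans h2.
  - exact: lt_le_trans h2.
- have bound u v : `|w| <= `|W u v| <= 1.
    have [-> | uv] := eqVneq u v; first by rewrite W_diag normr1 lexx ltW.
    by have /andP[-> /ltW ->] := norm_between_lt1 w1 (W_offdiag uv).
  have /andP[_ xy'_lt1] := norm_between_lt1 w1 (W_offdiag xy').
  have /andP[wxy _] := bound x y; have /andP[wx'y' _] := bound x' y'.
  have /andP[_ x'y_le1] := bound x' y.
  have lhs : `|w| ^+ 2 <= `|W x y| * `|W x' y'|.
    by rewrite expr2; apply: ler_pM; rewrite ?normr_ge0.
  have rhs : `|W x y'| * `|W x' y| < 1.
    by apply: le_lt_trans xy'_lt1; rewrite ler_piMr ?normr_ge0.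
  by move: lhs; rewrite eq_norm ler_pMr // (lt_geF rhs).
- have bound u v : 1 <= `|W u v| <= `|w|.
    have [-> | uv] := eqVneq u v; first by rewrite W_diag normr1 lexx ltW.
    by have /andP[/ltW -> ->] := norm_between_gt1 w1 (W_offdiag uv).
  have /andP[xy'_gt1 _] := norm_between_gt1 w1 (W_offdiag xy').
  have /andP[_ wxy] := bound x y; have /andP[_ wx'y'] := bound x' y'.
  have /andP[x'y_ge1 _] := bound x' y.
  have lhs : `|W x y| * `|W x' y'| <= `|w| ^+ 2.
    by rewrite expr2; apply: ler_pM; rewrite ?normr_ge0.
  have rhs : 1 < `|W x y'| * `|W x' y|.
    by apply: lt_le_trans xy'_gt1 _; rewrite ler_peMr ?normr_ge0.
  by move: lhs; rewrite eq_norm ger_pMr // (lt_geF rhs).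
Qed.

Lemma not_equiv_entry_inv a b b' : b != b' ->
  W a b = w -> W b a = w -> W a b' = w -> W b' a = w ->
  ~ typeII_equiv W (entry_inv W).
Proof.
move=> bb' ab ba ab' b'a /equiv_entry_inv_cross_ratio[s [u cross]].
(* At the preimages of (a, d; a, d) the inverted cross ratio is W_ad W_da = w^2. *)
have pin d : W a d = w -> W d a = w -> (s^-1)%g a = (u^-1)%g d.
  move=> ad da; apply: (@cross_ratio_eq_sqr _ ((s^-1)%g d) ((u^-1)%g a)).
  have := cross ((s^-1)%g a) ((s^-1)%g d) ((u^-1)%g a) ((u^-1)%g d).
  rewrite !permKV !W_diag ad da !invr1 !mulr1 => e.
  by rewrite -e; field.
have := pin b ab ba; rewrite (pin b' ab' b'a) => /perm_inj eq_bb'.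
by rewrite eq_bb' eqxx in bb'.
Qed.

End TypeIIMatrix.

Section SymAssocScheme.
Variables (n d : nat) (A : 'I_d.+1 -> 'M[algC]_n).
Hypothesis hA : sym_assoc_scheme A.

Lemma scheme_class0_entry x y : A ord0 x y = (x == y)%:R.
Proof. by case: hA => -> _; rewrite mxE. Qed.

Lemma scheme_entry_sym i x y : A i y x = A i x y.
Proof. by case: hA => _ [_ [symA _]]; rewrite -{1}symA mxE. Qed.

Lemma scheme_entry01 i x y : A i x y = 0 \/ A i x y = 1.
Proof. by case: hA => _ [_ [_ [+ _]]]. Qed.

Lemma scheme_entry_ge0 i x y : 0 <= A i x y.
Proof. by case: (scheme_entry01 i x y) => ->; rewrite ?ler01. Qed.

Lemma scheme_sum_entry x y : \sum_i A i x y = 1.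
Proof.
case: hA => _ [_ [_ [_ [sumA _]]]].
by have := congr1 (fun M : 'M[algC]_n => M x y) sumA; rewrite /= summxE mxE.
Qed.

Lemma scheme_entry_eq1 x y : exists i, A i x y = 1.
Proof.
have [i /eqP | none] := pickP (fun i => A i x y == 1); first by exists i.
have := scheme_sum_entry x y; rewrite big1 => [/eqP | i _]; first by rewrite eq_sym oner_eq0.
by case: (scheme_entry01 i x y) => // Ai; move: (none i); rewrite Ai eqxx.
Qed.

Lemma scheme_entry_eq0 i j x y : A i x y = 1 -> j != i -> A j x y = 0.
Proof.
move=> Ai ji; have := scheme_sum_entry x y.
rewrite (bigD1 i) //= Ai -[RHS]addr0 => /addrI sum0.
exact: psumr_eq0P (fun k _ => scheme_entry_ge0 k x y) sum0 j ji.
Qed.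

Lemma scheme_lin_comb_entry (c : 'I_d.+1 -> algC) i x y :
  A i x y = 1 -> (\sum_k c k *: A k) x y = c i.
Proof.
move=> Ai; rewrite summxE (bigD1 i) //= big1 ?addr0 => [|k ki]; rewrite mxE.
  by rewrite Ai mulr1.
by rewrite (scheme_entry_eq0 Ai ki) mulr0.
Qed.

Lemma scheme_offdiag_class i x y : x != y -> A i x y = 1 -> i != ord0.
Proof.
move=> xy Ai; apply/eqP => i0; move: Ai.
by rewrite i0 scheme_class0_entry (negPf xy) => /eqP; rewrite eq_sym oner_eq0.
Qed.

Lemma scheme_row_sum j x : \sum_y A j x y = #|[set y | A j x y == 1]|%:R.
Proof.
rewrite -sum1dep_card natr_sum [RHS]big_mkcond; apply: eq_bigr => y _.
by case: (scheme_entry01 j x y) => ->; rewrite ?eqxx // eq_sym oner_eq0.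
Qed.

Lemma scheme_lin_comb_not_equiv_entry_inv (c : 'I_d.+1 -> algC) j a :
  c ord0 = 1 -> c j != 0 -> (1 < #|[set y | A j a y == 1%R]|)%N ->
  (forall i, i != ord0 -> norm_between (c j) (c i)) ->
  let W := \sum_k c k *: A k in ~ typeII_equiv W (entry_inv W).
Proof.
move=> c0 cj_neq0 /card_gt1P[b [b' [+ + bb']]]; rewrite !inE => /eqP ab /eqP ab'.
move=> c_between W.
have W_diag x : W x x = 1 by rewrite (@scheme_lin_comb_entry _ ord0) ?scheme_class0_entry ?eqxx.
have W_offdiag x y : x != y -> norm_between (c j) (W x y).
  move=> xy; have [i Ai] := scheme_entry_eq1 x y.
  by rewrite (scheme_lin_comb_entry _ Ai) c_between // (scheme_offdiag_class xy Ai).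
have W_class x y : A j x y = 1 -> W x y = c j by apply: scheme_lin_comb_entry.
apply: (@not_equiv_entry_inv _ _ W_diag _ cj_neq0 W_offdiag a b b' bb');
  by apply: W_class; rewrite // scheme_entry_sym.
Qed.

End SymAssocScheme.

Lemma first_eigenmatrix_row_sum n d (A : 'I_d.+1 -> 'M[algC]_n) P j x :
  (0 < n)%N -> first_eigenmatrix A P -> \sum_y A j x y = P ord0 j.
Proof.
move=> n_gt0 [E [E0 [_ [E_orth [_ [_ AP]]]]]].
have AE0 : A j *m E ord0 = P ord0 j *: E ord0.
  rewrite AP mulmx_suml (bigD1 ord0) //= big1 ?addr0; first by rewrite -scalemxAl E_orth eqxx.
  by move=> i /negPf i0; rewrite -scalemxAl E_orth i0 scaler0.
have := congr1 (fun M : 'M[algC]_n => M x x) AE0.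
rewrite E0 -scalemxAr !mxE /= mulr1 [RHS]mulrC => /mulfI <-.
  by apply: eq_bigr => y _; rewrite !mxE mulr1.
by rewrite invr_eq0 pnatr_eq0 -lt0n.
Qed.

Lemma real_root_real_quadratic (C : numClosedFieldType) (b c x : C) :
  b \is Num.real -> 4 * c <= b ^+ 2 -> x ^+ 2 + b * x + c = 0 -> x \is Num.real.
Proof.
move=> bR disc root; set D := b ^+ 2 / 4 - c.
have D_ge0 : 0 <= D by rewrite subr_ge0 ler_pdivlMr // mulrC.
have : (x + b / 2) ^+ 2 = sqrtC D ^+ 2.
  by rewrite sqrtCK -[D]add0r -root /D; field.
move/eqP; rewrite eqf_sqr => sqr_eq.
rewrite -(addrK (b / 2) x) rpredB ?rpredM ?rpredV ?rpred_nat //.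
by case/orP: sqr_eq => /eqP ->; rewrite ?rpredN sqrtC_real.
Qed.

Lemma quadratic_root_norm_between (R : realFieldType) (q t : R) : 4 <= q ->
  t ^+ 2 + (q ^+ 2 - 3) * t + 1 = 0 ->
  let w := (- ((q - 3) * t) + (q - 1)) / (q ^+ 2 - 2 * q - 1) in
  norm_between t t /\ norm_between t w.
Proof.
move=> q_ge4 root w.
have D_gt0 : 0 < q ^+ 2 - 2 * q - 1 by nra.
have t_lt0 : t < 0 by nra.
have wD : w * (q ^+ 2 - 2 * q - 1) = - ((q - 3) * t) + (q - 1).
  by rewrite /w mulfVK // gt_eqF.
have w_gt0 : 0 < w by rewrite -(pmulr_lgt0 _ D_gt0) wD; nra.
rewrite /norm_between ltr0_norm // gtr0_norm //.
have [t_lt1 | t_gt1] : t < -1 \/ -1 < t.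
  by case: (ltrgtP t (-1)) => [| | t1]; [left | right | move: root; rewrite t1; nra].
- have w_gt1 : 1 < w by rewrite -(ltr_pM2r D_gt0) mul1r wD; nra.
  have w_le : w <= - t by rewrite -(ler_pM2r D_gt0) wD; nra.
  by split; apply/orP; right; apply/andP; split; rewrite // ltrNr.
- have w_lt1 : w < 1 by rewrite -(ltr_pM2r D_gt0) mul1r wD; nra.
  have w_ge : - t <= w by rewrite -(ler_pM2r D_gt0) wD; nra.
  by split; apply/orP; left; apply/andP; split; rewrite // ltrNl.
Qed.

Lemma algC_quadratic_root_norm_between (q : nat) (t : algC) : (4 <= q)%N ->
  t ^+ 2 + (q%:R ^+ 2 - 3) * t + 1 = 0 ->
  let w := (- ((q%:R - 3) * t) + (q%:R - 1)) / (q%:R ^+ 2 - 2 * q%:R - 1) in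
  norm_between t t /\ norm_between t w.
Proof.
move=> q_ge4 root w.
have tR : t \is Num.real.
  apply: real_root_real_quadratic root; first by rewrite rpredB ?rpredX ?rpred_nat.
  have q2_ge3 : (3 <= q ^ 2)%N by nia.
  by rewrite mulr1 -natrX -(natrB _ q2_ge3) -natrX -[4]/(4%:R) ler_nat; nia.
pose s : algR := in_algR tR.
have root_s : s ^+ 2 + ((q%:R : algR) ^+ 2 - 3) * s + 1 = 0.
  by apply: val_inj; rewrite !(rmorphD, rmorphM, rmorphB, rmorphXn, rmorph_nat, rmorph1, rmorph0).
have q_ge4' : (4 : algR) <= q%:R by rewrite -[4]/(4%:R) ler_nat.
have wE : algRval ((- ((q%:R - 3) * s) + (q%:R - 1)) / (q%:R ^+ 2 - 2 * q%:R - 1)) = w.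
  by rewrite !(fmorphV, rmorphD, rmorphM, rmorphB, rmorphN, rmorphXn, rmorph_nat, rmorph1).
have [st sw] := quadratic_root_norm_between q_ge4' root_s.
by split; [exact st | rewrite -wE; exact sw].
Qed.

Lemma sum_ord4 (V : nmodType) (F : 'I_4 -> V) :
  \sum_i F i = F (inord 0) + F (inord 1) + F (inord 2) + F (inord 3).
Proof.
rewrite !big_ord_recr big_ord0 /= add0r.
by congr (F _ + F _ + F _ + F _); apply: val_inj; rewrite /= inordK.
Qed.

Theorem proposition5p8 (q : nat) (hq4 : (4 <= q)%N) (hqeven : ~~ odd q)
  (A : 'I_4 -> 'M[algC]_(q ^ 2 - 1))
  (hA : sym_assoc_scheme A) (hP : first_eigenmatrix A (Pq q))
  (w3 : algC) (hw3 : w3 + w3^-1 + (q%:R) ^+ 2 - 3 = 0) :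
  (let W := A (inord 0) + w3 *: (A (inord 1) + A (inord 2) + A (inord 3)) in
   ~ typeII_equiv W (entry_inv W)) /\
  (let w1 := (- ((q%:R - 3) * w3) + (q%:R - 1)) / ((q%:R) ^+ 2 - 2 * q%:R - 1) in
   let W := A (inord 0) + w1 *: A (inord 1) + w1 *: A (inord 2) + w3 *: A (inord 3) in
   ~ typeII_equiv W (entry_inv W)).
Proof.
have n_gt0 : (0 < q ^ 2 - 1)%N by nia.
have w3_neq0 : w3 != 0.
  apply: contra_eqN hw3 => /eqP->; rewrite invr0 !add0r subr_eq0 -natrX -[3]/(3%:R).
  by rewrite eqr_nat; apply/eqP; nia.
have root : w3 ^+ 2 + (q%:R ^+ 2 - 3) * w3 + 1 = 0.
  by rewrite -[RHS](mulr0 w3) -hw3; field.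
have [w3_w3 w3_w1] := algC_quadratic_root_norm_between hq4 root.
pose a : 'I_(q ^ 2 - 1) := Ordinal n_gt0.
have valency3 : (1 < #|[set y | A (inord 3) a y == 1%R]|)%N.
  have := first_eigenmatrix_row_sum (inord 3) a n_gt0 hP.
  rewrite (scheme_row_sum hA) /Pq mxE inordK //= -(natrB _ (leq_trans _ hq4)) //.
  by move/eqP; rewrite eqr_nat => /eqP ->; lia.
pose c (v : algC) (i : 'I_4) := nth 0 [:: 1; v; v; w3] i.
have not_equiv v : norm_between w3 v ->
    let W := \sum_k c v k *: A k in ~ typeII_equiv W (entry_inv W).
  move=> w3_v; apply: (scheme_lin_comb_not_equiv_entry_inv hA _ _ valency3) => //.
  - by rewrite /c inordK.
  - by rewrite /c inordK // => -[[|[|[|[|k]]]] ?].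
have W_sum v : A (inord 0) + v *: A (inord 1) + v *: A (inord 2) + w3 *: A (inord 3)
    = \sum_k c v k *: A k.
  by rewrite sum_ord4 /c !inordK // scale1r.
split=> [W | w1 W]; last by rewrite /W W_sum; apply: not_equiv.
by rewrite /W !scalerDr !addrA W_sum; apply: not_equiv.
Qed.
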